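(* Let $G=(V,E)$ be an infinite vertex-transitive simple graph of bounded degree, with cyclic connective constant $\mu_G$. Let $\alpha_0$ be the unique solution of the equation $$\alpha + \tfrac12 \log\big(1 + e^{-2\alpha}\big) = \log \mu_G .$$ Then for all $\alpha > \alpha_0$ there exist constants $C_0(\alpha), c_0(\alpha) > 0$ such that for every finite $U \subset V$, every $z \in U$ and every $\ell \in \mathbb N$, $$\mathbb{P}_{U}\big( \| \gamma_z \| > \ell \big) \leq C_0(\alpha) \exp\big( - c_0(\alpha)\, \ell \big).$$ Moreover, $C_0(\alpha)$ and $c_0(\alpha)$ can be chosen so that $\lim_{\alpha \to \infty} c_0(\alpha)/\alpha = 1$ and $\limsup_{\alpha \to \infty} C_0(\alpha) < \infty$.
   Context: For a finite simple graph with vertex set $U$ (here the subgraph of $G$ induced by $U$), a permutation on $U$ is a bijection $\pi:U\to U$ such that for every $x\in U$ either $\pi(x)=x$ or $\{x,\pi(x)\}$ is an edge. Let $\mathcal S_U$ be the set of such permutations, $\mathcal H_U(\pi)=\sum_{x\in U}\mathbb 1\{\pi(x)\neq x\}$, and for $\alpha\in\mathbb R$ let $\mathbb P_U(\pi)=e^{-\alpha\mathcal H_U(\pi)}/Z(U)$, where $Z(U)=\sum_{\pi\in\mathcal S_U}e^{-\alpha\mathcal H_U(\pi)}$. For $z\in U$, $\gamma_z(\pi)$ is the cycle of $\pi$ containing $z$, i.e. the directed graph with vertices $\{\pi^i(z):i\in\mathbb N\}$ and edges $(\pi^i(z),\pi^{i+1}(z))$; $\|\gamma_z\|$ is its number of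 edges (it is $0$ if $\pi(z)=z$). A cycle in $G$ is a finite directed subgraph with vertex set enumerated as $x^1,\dots,x^n$ and edge set $\{(x^i,x^{i+1}):1\le i\le n-1\}\cup\{(x^n,x^1)\}$. Fixing a vertex $0$ (origin), $SAP_n$ denotes the set of cycles in $G$ starting from $0$ with $n$ edges ($SAP_0=\{0\}$), and the cyclic connective constant is $\mu_G=\limsup_{n\to\infty}|SAP_n|^{1/n}$. *)

From HB Require Import structures.
From mathcomp Require Import all_boot all_order all_algebra all_fingroup.
From mathcomp Require Import finmap.
From mathcomp Require Import all_classical all_reals all_analysis.
Set Implicit Arguments. Unset Strict Implicit. Unset Printing Implicit Defensive.
Import Order.TTheory GRing.Theory Num.Theory.
Import numFieldNormedType.Exports.
Local Open Scope classical_set_scope.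
Local Open Scope ring_scope.

Definition simple_graph (V : choiceType) (adj : rel V) : Prop :=
  (forall x y, adj x y = adj y x) /\ (forall x, ~~ adj x x).

Definition infinite_graph (V : choiceType) : Prop := ~ finite_set [set: V].

Definition bounded_degree (V : choiceType) (adj : rel V) : Prop :=
  exists D : nat, forall x : V,
    exists s : seq V, (size s <= D)%N /\ (forall y, adj x y -> y \in s).

Definition vertex_transitive (V : choiceType) (adj : rel V) : Prop :=
  forall x y : V, exists f : V -> V,
    bijective f /\ (forall a b, adj (f a) (f b) = adj a b) /\ f x = y.

(* Self-avoiding polygons (cycles in G) from the origin o with n >= 1 edges,
   encoded by their enumeration x^1 = o, x^2, ..., x^n (distinct vertices,
   consecutive ones adjacent, x^n adjacent to x^1). *)
Definition SAP (V : choiceType) (adj : rel V) (o : V) (n : nat) : set (seq V) :=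
  [set s | size s = n /\ head o s = o /\ uniq s /\ path.cycle adj s].

Definition card_SAP (V : choiceType) (adj : rel V) (o : V) (n : nat) : nat :=
  if n == 0%N then 1%N else #|` fset_set (SAP adj o n)|%fset.

Definition mu_G (R : realType) (V : choiceType) (adj : rel V) (o : V) : R :=
  limn_sup (fun n : nat => ((card_SAP adj o n)%:R : R) `^ (n%:R^-1)).

Section Perms.
Variables (V : choiceType) (adj : rel V) (U : {fset V}).

Definition graph_perm (p : {perm U}) : bool :=
  [forall x : U, (p x == x) || adj (val x) (val (p x))].

Definition Hperm (p : {perm U}) : nat := #|[set x : U | p x != x]|.

(* ||gamma_z(pi)||: number of edges of the cycle of pi containing z *)
Definition cyc_len (p : {perm U}) (z : U) : nat :=
  if p z == z then 0%N else #|porbit p z|.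

Variable (R : realType).

Definition weight (alpha : R) (p : {perm U}) : R :=
  expR (- alpha * (Hperm p)%:R).

Definition Zpart (alpha : R) : R :=
  \sum_(p : {perm U} | graph_perm p) weight alpha p.

Definition prob_cyc_gt (alpha : R) (z : U) (l : nat) : R :=
  (\sum_(p : {perm U} | graph_perm p && (l < cyc_len p z)%N) weight alpha p)
    / Zpart alpha.
End Perms.

(* Let the cycle of z under pi have n >= 2 vertices t_0 = z, ..., t_(n-1).  Keep pi off
   the cycle and, on it, fix or transpose each of the floor(n/2) pairs
   {t_(2i), t_(2i+1)}: this gives 2^floor(n/2) distinct graph permutations.  The cycle
   contributes e^(-alpha n) to the weight of pi, a transposition e^(-2 alpha) and a fixed
   pair 1, so summing over all modifications,
   (1 + e^(-2 alpha))^floor(n/2) * P(the cycle of z is t) <= e^(-alpha n).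
   An automorphism sending z to the origin turns the possible t into self-avoiding
   polygons, of which there are at most C A^n for any A > mu_G.  Hence
   P(||gamma_z|| = n) <= C sqrt(1 + e^(-2 alpha)) (A / beta(alpha))^n with
   beta(alpha) = e^alpha sqrt(1 + e^(-2 alpha)); alpha > alpha_0 means exactly
   beta(alpha) > mu_G, and the geometric tail gives c_0 = log (beta / A).  For large
   alpha, A = mu_G + 1 makes c_0 = alpha + O(1) and C_0 bounded. *)

From HB Require Import structures.
From mathcomp Require Import all_boot all_order all_algebra all_fingroup finmap.
From mathcomp Require Import all_classical all_reals all_analysis.
From mathcomp Require Import zify ring lra.
Import Order.TTheory GRing.Theory Num.Theory.
Import numFieldNormedType.Exports.

Set Implicit Arguments. Unset Strict Implicit. Unset Printing Implicit Defensive.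
Local Open Scope ring_scope.

Lemma ler_sum_inj (R : numDomainType) (I J : finType) (P : pred I) (Q : pred J)
    (h : I -> J) (F : J -> R) :
  (forall j, 0 <= F j) -> {in P &, injective h} -> (forall i, P i -> Q (h i)) ->
  \sum_(i | P i) F (h i) <= \sum_(j | Q j) F j.
Proof.
move=> F_ge0 h_inj PQ.
rewrite -(big_imset F h_inj) [leRHS](bigID (mem (h @: P))) /=.
have -> : \sum_(j | Q j && (j \in h @: P)) F j = \sum_(j in h @: P) F j.
  apply: eq_bigl => j; apply/andP/idP => [[]//|hPj]; split=> //.
  by case/imsetP: hPj => i Pi ->; exact: PQ.
by rewrite lerDl sumr_ge0.
Qed.

Lemma sum_ffun_exp_card (R : comPzSemiRingType) (I : finType) (x : R) :
  \sum_(f : {ffun I -> bool}) x ^+ #|[set i | f i]| = (1 + x) ^+ #|I|.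
Proof.
have -> : 1 + x = \sum_(b : bool) (if b then x else 1) by rewrite big_bool addrC.
rewrite -prodr_const bigA_distr_bigA; apply: eq_bigr => f _.
by rewrite -big_mkcond prodr_const cardsE.
Qed.

Lemma sumn_half_double (F : nat -> nat) m :
  (\sum_(0 <= j < m.*2) F j./2)%N = (\sum_(0 <= i < m) F i).*2.
Proof.
elim: m => [|m IH]; first by rewrite !big_geq.
rewrite doubleS !big_nat_recr //= IH uphalf_double half_double.
by rewrite doubleD -!addnn; lia.
Qed.

(* The identity when [g] is not injective. *)
Definition perm_of_fun (T : finType) (g : T -> T) : {perm T} :=
  if injectiveP g is ReflectT g_inj then perm g_inj else 1%g.

Lemma perm_of_funE (T : finType) (g : T -> T) : injective g -> perm_of_fun g =1 g.
Proof. by rewrite /perm_of_fun; case: injectiveP => // g_inj _ x; rewrite permE. Qed.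

Definition mate (j : nat) : nat := if odd j then j.-1 else j.+1.

Lemma mate_lt j m : (j < m.*2)%N -> (mate j < m.*2)%N.
Proof. rewrite /mate; case: (boolP (odd j)) => oj; lia. Qed.

Lemma half_mate j : (mate j)./2 = j./2.
Proof. rewrite /mate; case: (boolP (odd j)) => oj; lia. Qed.

Lemma mateK : involutive mate.
Proof. by move=> j; rewrite /mate; case: (boolP (odd j)) => oj; case: ifP; lia. Qed.

Lemma mate_neq j : mate j != j.
Proof. rewrite /mate; case: (boolP (odd j)) => oj; lia. Qed.

Lemma modSn_neq j n : (1 < n)%N -> (j < n)%N -> (j.+1 %% n)%N != j.
Proof.
move=> n_gt1 jn; have [lt|ge] := ltnP j.+1 n; first by rewrite modn_small //; lia.
have -> : n = j.+1 by lia.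
by rewrite modnn; lia.
Qed.

Lemma HpermE (V : choiceType) (U : {fset V}) (p : {perm U}) :
  Hperm p = #|[set x | p x != x]|.
Proof. by apply: eq_card => x; rewrite !inE; apply/idP/idP; rewrite in_setE. Qed.

Section Reroute.
Variables (V : choiceType) (adj : rel V) (U : {fset V}).
Hypothesis adj_sym : forall x y, adj x y = adj y x.
Variables (z : U) (t : seq U) (n : nat).
Hypotheses (t_uniq : uniq t) (size_t : size t = n) (n_gt1 : (1 < n)%N).
Local Notation k := n./2.
Local Notation "''t_' j" := (nth z t j) (at level 8, j at level 2, format "''t_' j").

Lemma index_lt y : (index y t < n)%N = (y \in t).
Proof. by rewrite -size_t index_mem. Qed.

Lemma mem_nth_t j : (j < n)%N -> 't_j \in t.
Proof. by rewrite -size_t; apply: mem_nth. Qed.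

Lemma nth_t_eq i j : (i < n)%N -> (j < n)%N -> ('t_i == 't_j) = (i == j).
Proof. by rewrite -size_t => ? ?; apply: nth_uniq. Qed.

Lemma index_nth_t j : (j < n)%N -> index 't_j t = j.
Proof. by rewrite -size_t => ?; apply: index_uniq. Qed.

Definition rotates (p : {perm U}) : bool :=
  graph_perm adj p && [forall j : 'I_n, p 't_j == 't_(j.+1 %% n)].

Implicit Types (p : {perm U}) (f : {ffun 'I_k -> bool}).

Lemma rotates_nth p j : rotates p -> (j < n)%N -> p 't_j = 't_(j.+1 %% n).
Proof. by case/andP => _ /forallP rot_p jn; apply/eqP: (rot_p (Ordinal jn)). Qed.

Lemma rotates_adj p j : rotates p -> (j < n)%N -> adj (val 't_j) (val 't_(j.+1 %% n)).
Proof.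
move=> rot_p jn; case/andP: (rot_p) => /forallP /(_ 't_j) + _.
rewrite rotates_nth // nth_t_eq ?ltn_pmod ?(ltnW n_gt1) //.
by rewrite (negbTE (modSn_neq n_gt1 jn)).
Qed.

Lemma rotates_mem p y : rotates p -> (p y \in t) = (y \in t).
Proof.
move=> rot_p; have pt_t : {subset map p t <= t}.
  move=> _ /mapP [x xt ->]; rewrite -(nth_index z xt) rotates_nth ?index_lt //.
  by rewrite mem_nth_t // ltn_pmod // ltnW.
have pt_uniq : uniq (map p t) by rewrite (map_inj_uniq (@perm_inj _ p)).
have [_ eq_t] := uniq_min_size pt_uniq pt_t (eq_leq (esym (size_map p t))).
by rewrite -eq_t mem_map //; exact: perm_inj.
Qed.

(* [f] chooses which of the k pairs {'t_(2i), 't_(2i+1)} are transposed; [pair_flag f]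
   extends it by [false] to all of nat. *)
Definition pair_flag f m := [exists i : 'I_k, (val i == m) && f i].

Lemma pair_flagE f (i : 'I_k) : pair_flag f i = f i.
Proof.
by apply/existsP/idP => [[i' /andP [/eqP /val_inj -> //]]|fi]; exists i; rewrite eqxx.
Qed.

Definition swapped f j : bool := (j < k.*2)%N && pair_flag f j./2.

Lemma swapped_double f (i : 'I_k) : swapped f i.*2 = f i.
Proof. by rewrite /swapped ltn_double ltn_ord doubleK pair_flagE. Qed.

Lemma swapped_lt f j : swapped f j -> (j < n)%N.
Proof. by case/andP; lia. Qed.

Definition swap_pairs f y :=
  if swapped f (index y t) then 't_(mate (index y t)) else y.

Lemma swap_pairsK f : involutive (swap_pairs f).
Proof.
move=> y; rewrite {2}/swap_pairs; case: ifP => [sw|sw]; last by rewrite /swap_pairs sw.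
have yt : y \in t by rewrite -index_lt (swapped_lt sw).
have /andP [j_lt fj] := sw; have mate_lt := mate_lt j_lt.
by rewrite /swap_pairs index_nth_t ?/swapped ?mate_lt ?half_mate ?fj ?mateK ?nth_index //; lia.
Qed.

Lemma swap_pairs_mem f y : y \in t -> swap_pairs f y \in t.
Proof.
rewrite /swap_pairs; case: ifP => // /andP [j_lt _] _.
by apply: mem_nth_t; have := mate_lt j_lt; lia.
Qed.

Lemma swap_pairs_moved f j : (j < n)%N -> (swap_pairs f 't_j != 't_j) = swapped f j.
Proof.
move=> jn; rewrite /swap_pairs index_nth_t //.
case: ifP => [/andP [j_lt _]|]; last by rewrite eqxx.
by rewrite nth_t_eq ?mate_neq //; have := mate_lt j_lt; lia.
Qed.

Definition reroute_fun p f y := if y \in t then swap_pairs f y else p y.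

Lemma reroute_fun_inj p f : rotates p -> injective (reroute_fun p f).
Proof.
move=> rot_p y1 y2; rewrite /reroute_fun.
case: (boolP (y1 \in t)) => y1t; case: (boolP (y2 \in t)) => y2t.
- exact: (can_inj (swap_pairsK f)).
- by move=> e; move: (swap_pairs_mem f y1t); rewrite e rotates_mem // (negbTE y2t).
- by move=> e; move: (swap_pairs_mem f y2t); rewrite -e rotates_mem // (negbTE y1t).
- exact: perm_inj.
Qed.

Definition reroute p f : {perm U} := perm_of_fun (reroute_fun p f).

Lemma rerouteE p f : rotates p -> reroute p f =1 reroute_fun p f.
Proof. by move=> rot_p; apply: perm_of_funE; apply: reroute_fun_inj. Qed.

Lemma graph_perm_reroute p f : rotates p -> graph_perm adj (reroute p f).
Proof.
move=> rot_p; apply/forallP => y; rewrite rerouteE // /reroute_fun.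
case: (boolP (y \in t)) => yt; last by case/andP: rot_p => /forallP ->.
rewrite /swap_pairs; case: ifP => [/andP [j_lt _]|]; last by rewrite eqxx.
apply/orP; right; rewrite -{1}(nth_index z yt).
have : (index y t < n)%N by rewrite index_lt.
move: (index y t) j_lt => j j_lt jn.
rewrite /mate; case: ifP => j_odd.
- have j_gt0 := odd_gt0 j_odd.
  have := rotates_adj rot_p (_ : (j.-1 < n)%N); rewrite prednK // modn_small // adj_sym.
  by apply; lia.
- have := mate_lt j_lt; rewrite /mate j_odd /= => j1_lt.
  have j1_n : (j.+1 < n)%N by lia.
  by have := rotates_adj rot_p jn; rewrite modn_small.
Qed.

Lemma reroute_inj p p' f f' : rotates p -> rotates p' ->
  reroute p f = reroute p' f' -> p = p' /\ f = f'.
Proof.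
move=> rot_p rot_p' e.
have e' y : reroute_fun p f y = reroute_fun p' f' y by rewrite -!rerouteE // e.
split.
- apply/permP => y; case: (boolP (y \in t)) => yt.
    by rewrite -(nth_index z yt) !rotates_nth ?index_lt.
  by move: (e' y); rewrite /reroute_fun (negbTE yt).
- apply/ffunP => i; rewrite -!swapped_double.
  have i2n : (i.*2 < n)%N by have := ltn_ord i; lia.
  have := e' 't_(i.*2); rewrite /reroute_fun mem_nth_t // => e_i.
  by rewrite -!swap_pairs_moved // e_i.
Qed.

Definition moved_off p := #|[set y | p y != y] :\: [set y | y \in t]|.

Lemma Hperm_split q :
  Hperm q = (#|[set y | q y != y] :&: [set y | y \in t]| + moved_off q)%N.
Proof. by rewrite HpermE (cardsID [set y | y \in t]). Qed.

Lemma Hperm_rotates p : rotates p -> Hperm p = (n + moved_off p)%N.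
Proof.
move=> rot_p; rewrite Hperm_split; congr (_ + _)%N.
have -> : [set y | p y != y] :&: [set y | y \in t] = [set y | y \in t].
  apply/setP => y; rewrite !inE andb_idl // => yt.
  have jn : (index y t < n)%N by rewrite index_lt.
  rewrite -(nth_index z yt) rotates_nth // nth_t_eq ?modSn_neq //.
  by rewrite ltn_pmod //; lia.
by rewrite cardsE -size_t; apply/card_uniqP.
Qed.

Lemma card_swapped f : #|[set j : 'I_n | swapped f j]| = (#|[set i | f i]|).*2.
Proof.
have k2n : (k.*2 <= n)%N by lia.
rewrite -!sum1dep_card !big_mkcond /= -(big_mkord xpredT (fun j => (swapped f j : nat))).
rewrite (big_cat_nat (leq0n _) k2n) /=.
have -> : (\sum_(k.*2 <= j < n) (swapped f j : nat))%N = 0%N.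
  by rewrite big_nat_cond big1 // => j /andP [/andP [j_ge _] _]; rewrite /swapped ltnNge j_ge.
rewrite addn0 (eq_big_nat _ _ (F2 := fun j => (pair_flag f j./2 : nat))); last first.
  by move=> j /andP [_ j_lt]; rewrite /swapped j_lt.
rewrite (sumn_half_double (fun m => pair_flag f m : nat)) big_mkord [in RHS]big_mkcond.
congr (_.*2).
by apply: eq_bigr => i _; rewrite pair_flagE; case: (f i).
Qed.

Lemma Hperm_reroute p f : rotates p ->
  Hperm (reroute p f) = ((#|[set i | f i]|).*2 + moved_off p)%N.
Proof.
move=> rot_p; rewrite Hperm_split; congr (_ + _)%N; last first.
  by apply: eq_card => y; rewrite !inE rerouteE // /reroute_fun; case: (y \in t).
have -> : [set y | reroute p f y != y] :&: [set y | y \in t] =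
          (fun j : 'I_n => 't_j) @: [set j : 'I_n | swapped f j].
  apply/setP => y; rewrite !inE rerouteE // /reroute_fun.
  case: (boolP (y \in t)) => yt /=; rewrite ?andbT ?andbF.
  - have jn : (index y t < n)%N by rewrite index_lt.
    apply/idP/imsetP => [moved|[j]].
    + exists (Ordinal jn); last by rewrite nth_index.
      by rewrite inE; move: moved; rewrite -{1 2}(nth_index z yt) swap_pairs_moved.
    + by rewrite inE -swap_pairs_moved // => moved ->.
  - by apply/esym/imsetP => [[j _ yj]]; move: yt; rewrite yj mem_nth_t.
rewrite card_imset ?card_swapped // => i j /eqP.
by rewrite nth_t_eq // => /eqP /val_inj.
Qed.

Variable R : realType.
Implicit Types a : R.

Lemma weight_rotates a p : rotates p ->
  weight a p = expR (- a * n%:R) * expR (- a * (moved_off p)%:R).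
Proof. by move=> rot_p; rewrite /weight Hperm_rotates // natrD mulrDr expRD. Qed.

Lemma weight_reroute a p f : rotates p ->
  weight a (reroute p f)
    = expR (- a * (moved_off p)%:R) * expR (- (2 * a)) ^+ #|[set i | f i]|.
Proof.
move=> rot_p; rewrite /weight Hperm_reroute // natrD mulrDr expRD mulrC -expRM_natl.
by congr (_ * expR _); rewrite -mul2n natrM; ring.
Qed.

Lemma reroute_bound a (Q : pred {perm U}) : {subset Q <= rotates} ->
  (1 + expR (- (2 * a))) ^+ k * \sum_(p | Q p) weight a p
    <= expR (- a * n%:R) * Zpart adj U a.
Proof.
move=> Q_rot.
have -> : (1 + expR (- (2 * a))) ^+ k * \sum_(p | Q p) weight a p =
    expR (- a * n%:R) * \sum_(p | Q p) \sum_(f : {ffun 'I_k -> bool}) weight a (reroute p f).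
  rewrite !mulr_sumr; apply: eq_bigr => p /Q_rot rot_p.
  under eq_bigr do rewrite weight_reroute //.
  by rewrite -mulr_sumr sum_ffun_exp_card card_ord weight_rotates //; ring.
rewrite ler_wpM2l ?expR_ge0 // pair_big_dep /=.
apply: (@ler_sum_inj _ _ _ _ _ (fun pf => reroute pf.1 pf.2)).
- by move=> q; apply: expR_ge0.
- move=> [p f] [p' f'] /andP [Qp _] /andP [Qp' _] /= e.
  by case: (reroute_inj (Q_rot _ Qp) (Q_rot _ Qp') e) => /= -> ->.
- by move=> [p f] /andP [Qp _]; apply: graph_perm_reroute; apply: Q_rot.
Qed.

End Reroute.

Local Open Scope classical_set_scope.

Section SelfAvoidingPolygons.
Variables (V : choiceType) (adj : rel V) (o : V) (nbrs : V -> seq V) (D : nat).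
Hypothesis size_nbrs : forall x, (size (nbrs x) <= D)%N.
Hypothesis nbrs_adj : forall x y, adj x y -> y \in nbrs x.
Hypothesis D_gt0 : (0 < D)%N.

Fixpoint walks m x : seq (seq V) :=
  if m is m'.+1 then flatten [seq [seq y :: s | s <- walks m' y] | y <- nbrs x]
  else [:: [::]].

Lemma mem_walks m x s : size s = m -> path adj x s -> s \in walks m x.
Proof.
elim: m x s => [|m IH] x [|y s] //= [size_s] /andP [xy ys].
apply/flattenP; exists [seq y :: s' | s' <- walks m y].
  by apply/mapP; exists y => //; apply: nbrs_adj.
by rewrite mem_map ?IH // => ? ? [].
Qed.

Lemma size_walks m x : (size (walks m x) <= D ^ m)%N.
Proof.
elim: m x => [|m IH] x //=.
rewrite size_flatten /shape -map_comp expnS.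
have sumn_le (l : seq V) : (sumn [seq size (walks m y) | y <- l] <= size l * D ^ m)%N.
  by elim: l => //= y l IHl; rewrite mulSn leq_add.
rewrite (eq_map (g := fun y => size (walks m y))) => [|y /=]; last by rewrite size_map.
exact: leq_trans (sumn_le _) (leq_mul (size_nbrs x) (leqnn _)).
Qed.

Lemma SAP_sub_walks n : SAP adj o n.+1 `<=` [set` [seq o :: s | s <- walks n o]].
Proof.
move=> s [size_s [head_s [_ cyc]]].
case: s size_s head_s cyc => // x s [size_s] /= x_o; subst x => cyc.
rewrite /= mem_map => [|? ? [] //]; apply: mem_walks => //.
by move: cyc; rewrite /= rcons_path => /andP [].
Qed.

Lemma SAP_finite n : finite_set (SAP adj o n).
Proof.
case: n => [|n]; last exact: sub_finite_set (@SAP_sub_walks n) (finite_seq _).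
apply: (sub_finite_set _ (finite_seq [:: [::]])) => s [size_s _].
by case: s size_s.
Qed.

Lemma card_SAP_le n : (card_SAP adj o n <= D ^ n)%N.
Proof.
rewrite /card_SAP; case: n => [|n] //=.
apply: (@leq_trans (size [seq o :: s | s <- walks n o])).
  apply: uniq_leq_size; first exact: fset_uniq.
  by move=> s; rewrite in_fset_set ?inE; [exact: SAP_sub_walks | exact: SAP_finite].
by rewrite size_map expnS; apply: leq_trans (size_walks n o) _; rewrite leq_pmull.
Qed.

End SelfAvoidingPolygons.

Section Beta.
Variable R : realType.
Implicit Types a : R.

Definition swap_gain a : R := Num.sqrt (1 + expR (- (2 * a))).
Definition beta a : R := expR a * swap_gain a.

Lemma swap_gain_ge1 a : 1 <= swap_gain a.
Proof. by rewrite -sqrtr1 ler_sqrt ?lerDl ?expR_ge0 // addr_ge0 ?expR_ge0. Qed.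

Lemma swap_gain_gt0 a : 0 < swap_gain a.
Proof. exact: lt_le_trans ltr01 (swap_gain_ge1 a). Qed.

Lemma swap_gain_sqr a : swap_gain a ^+ 2 = 1 + expR (- (2 * a)).
Proof. by rewrite sqr_sqrtr // addr_ge0 ?expR_ge0. Qed.

Lemma swap_gain_le2 a : 0 <= a -> swap_gain a <= 2.
Proof.
move=> a_ge0; rewrite -(ler_pXn2r (n := 2)) ?nnegrE ?ltW ?swap_gain_gt0 // swap_gain_sqr.
have : expR (- (2 * a)) <= 1 by rewrite -[leRHS]expR0 ler_expR; lra.
lra.
Qed.

Lemma beta_gt0 a : 0 < beta a.
Proof. by rewrite mulr_gt0 ?expR_gt0 ?swap_gain_gt0. Qed.

Lemma expR_le_beta a : expR a <= beta a.
Proof. by rewrite ler_peMr ?expR_ge0 ?swap_gain_ge1. Qed.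

Lemma beta_sqr a : beta a ^+ 2 = expR (2 * a) + 1.
Proof.
rewrite exprMn swap_gain_sqr -expRM_natl mulrDr mulr1 -expRD.
by rewrite (_ : 2%:R * a + - (2 * a) = 0) ?expR0 //; ring.
Qed.

Lemma ltr_beta : {mono beta : a a' / a < a'}.
Proof.
move=> a a'; rewrite -(ltr_pXn2r (n := 2)) ?nnegrE ?ltW ?beta_gt0 //.
by rewrite !beta_sqr ltrD2r ltr_expR ltr_pM2l.
Qed.

Lemma ln_beta a : ln (beta a) = a + 2^-1 * ln (1 + expR (- (2 * a))).
Proof.
rewrite lnM ?posrE ?expR_gt0 ?swap_gain_gt0 // expRK -swap_gain_sqr lnXn ?swap_gain_gt0 //.
by rewrite -(mulr_natl (ln (swap_gain a))) mulrA mulVf ?mul1r.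
Qed.

Lemma lt_beta (mu a0 a : R) :
  ln (beta a0) = ln mu -> a0 < a -> mu < beta a.
Proof.
move=> ln_a0 a0_lt; have [mu_le0|mu_gt0] := lerP mu 0.
  exact: le_lt_trans mu_le0 (beta_gt0 a).
have <- : beta a0 = mu by rewrite -[LHS]lnK ?posrE ?beta_gt0 // ln_a0 lnK.
by rewrite ltr_beta.
Qed.

End Beta.

Lemma Zpart_gt0 (V : choiceType) (adj : rel V) (U : {fset V}) (R : realType) (a : R) :
  0 < Zpart adj U a.
Proof.
have id_graph : graph_perm adj (1%g : {perm U}) by apply/forallP => x; rewrite perm1 eqxx.
rewrite /Zpart (bigD1 1%g) //= ltr_pwDl ?expR_gt0 //.
by rewrite sumr_ge0 // => p _; exact: expR_ge0.
Qed.

Lemma sum_geometric_tail_le (R : realFieldType) (r : R) (l N : nat) : 0 <= r < 1 ->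
  \sum_(j < N | (l < j)%N) r ^+ j <= r ^+ l / (1 - r).
Proof.
case/andP=> r_ge0 r_lt1; rewrite ler_pdivlMr ?subr_gt0 // big_mkcond /= mulrC.
have telescope : (1 - r) * \sum_(j < N) (if (l < j)%N then r ^+ j else 0)
    + r ^+ (maxn N l.+1) = r ^+ l.+1.
  elim: N => [|N IH]; first by rewrite big_ord0 mulr0 add0r max0n.
  rewrite big_ord_recr /=; case: (ltnP l N) => lN.
    have [-> e] : maxn N.+1 l.+1 = N.+1 /\ maxn N l.+1 = N by split; lia.
    by rewrite -IH e exprS; ring.
  have [-> e] : maxn N.+1 l.+1 = l.+1 /\ maxn N l.+1 = l.+1 by split; lia.
  by rewrite addr0 -[in RHS]IH e.
apply: (@le_trans _ _ (r ^+ l.+1)); first by rewrite -telescope lerDl exprn_ge0.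
by rewrite exprS ler_piMl ?exprn_ge0 // ltW.
Qed.

Section CycleThroughOrigin.
Variables (V : choiceType) (adj : rel V) (o : V).
Hypothesis adj_sym : forall x y, adj x y = adj y x.
Hypothesis SAP_fin : forall n, finite_set (SAP adj o n).
Variable phi : V -> V.
Hypothesis phi_inj : injective phi.
Hypothesis phi_adj : forall a b, adj (phi a) (phi b) = adj a b.
Variables (U : {fset V}) (z : U).
Hypothesis phi_z : phi (val z) = o.

Definition cyc_len_eq n := [pred p : {perm U} | graph_perm adj p && (cyc_len p z == n)].

Lemma cyc_len_eqP n p : (0 < n)%N -> cyc_len_eq n p ->
  [/\ #|porbit p z| = n, uniq (traject p z n) & (1 < n)%N].
Proof.
move=> n_gt0 /andP [_]; rewrite /cyc_len; case: ifP => [_ /eqP n0|pz /eqP orb_n].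
  by move: n_gt0; rewrite -n0.
split=> //; first by rewrite -orb_n uniq_traject_porbit.
case: n n_gt0 orb_n => [|[|n]] // _ orb_1.
by move: (iter_porbit p z) pz; rewrite orb_1 /= => ->; rewrite eqxx.
Qed.

Lemma cyc_len_eq_rotates n p : (0 < n)%N -> cyc_len_eq n p ->
  rotates adj z (traject p z n) n p.
Proof.
move=> n_gt0 pn; have [orb_n _ _] := cyc_len_eqP n_gt0 pn.
apply/andP; split; first by case/andP: pn.
apply/forallP => j; rewrite !nth_traject ?ltn_pmod // -iterS.
have [lt|ge] := ltnP j.+1 n; first by rewrite modn_small.
have -> : j.+1 = n by have := ltn_ord j; lia.
by rewrite modnn -{1}orb_n iter_porbit.
Qed.

Lemma cycle_traject n p : (0 < n)%N -> cyc_len_eq n p ->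
  path.cycle (frel p) (traject p z n).
Proof.
move=> n_gt0 pn; have [orb_n _ _] := cyc_len_eqP n_gt0 pn.
case: n n_gt0 orb_n {pn} => // n _ orb_n; rewrite trajectS /=.
have -> : rcons (traject p (p z) n) z = traject p (p z) n.+1.
  by rewrite trajectSr -iterSr -orb_n iter_porbit.
exact: fpath_traject.
Qed.

Definition relocate (s : seq U) : seq V := map (fun u => phi (val u)) s.

Lemma relocate_inj : injective relocate.
Proof. by apply: inj_map => u v /phi_inj /val_inj. Qed.

Lemma relocate_orbit_SAP n p : (0 < n)%N -> cyc_len_eq n p ->
  SAP adj o n (relocate (traject p z n)).
Proof.
move=> n_gt0 pn; have [_ t_uniq n_gt1] := cyc_len_eqP n_gt0 pn.
have rot_p := cyc_len_eq_rotates n_gt0 pn.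
split; first by rewrite size_map size_traject.
split; first by case: n n_gt0 {pn t_uniq n_gt1 rot_p}.
split; first by rewrite map_inj_uniq // => u v /phi_inj /val_inj.
rewrite cycle_map.
apply: (sub_in_cycle (P := mem (traject p z n))) (cycle_traject n_gt0 pn); last exact/allP.
move=> u v u_t _ /eqP <-; rewrite /= phi_adj.
have jn : (index u (traject p z n) < n)%N by rewrite -{2}(size_traject p z n) index_mem.
rewrite -(nth_index z u_t) (rotates_nth rot_p jn).
exact: rotates_adj t_uniq (size_traject _ _ _) n_gt1 _ _ rot_p jn.
Qed.

Definition orbit_tuple n (p : {perm U}) : n.-tuple U :=
  Tuple (introT eqP (size_traject p z n)).

Lemma card_orbit_tuples_le n : (0 < n)%N ->
  (#|orbit_tuple n @: [set p | cyc_len_eq n p]| <= card_SAP adj o n)%N.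
Proof.
move=> n_gt0; rewrite /card_SAP gtn_eqF // cardE.
rewrite -(size_map (fun s : n.-tuple U => relocate s)).
apply: uniq_leq_size.
  by rewrite map_inj_uniq ?enum_uniq // => s s' /relocate_inj /val_inj.
move=> x /mapP [s]; rewrite mem_enum => /imsetP [p]; rewrite inE => pn -> ->.
by rewrite in_fset_set // inE; exact: relocate_orbit_SAP.
Qed.

Variable R : realType.
Implicit Types a A C : R.

Lemma sum_cyc_len_eq_le a n : (0 < n)%N ->
  (1 + expR (- (2 * a))) ^+ n./2 * \sum_(p | cyc_len_eq n p) weight a p
    <= (card_SAP adj o n)%:R * (expR (- a * n%:R) * Zpart adj U a).
Proof.
move=> n_gt0; set keys := orbit_tuple n @: [set p | cyc_len_eq n p].
rewrite (partition_big (orbit_tuple n) (mem keys)) => [|p pn]; last first.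
  by apply: imset_f; rewrite inE.
rewrite mulr_sumr /=.
apply: (@le_trans _ _ (\sum_(s in keys) (expR (- a * n%:R) * Zpart adj U a))).
  apply: ler_sum => s /imsetP [p0]; rewrite inE => p0n ->.
  have [_ t_uniq n_gt1] := cyc_len_eqP n_gt0 p0n.
  apply: (reroute_bound adj_sym t_uniq (size_traject _ _ _) n_gt1).
  move=> p /andP [pn /eqP /(congr1 val) /= same_orbit].
  by rewrite -same_orbit; exact: cyc_len_eq_rotates.
rewrite sumr_const -[_ *+ _]mulr_natl.
rewrite ler_wpM2r ?mulr_ge0 ?expR_ge0 ?(ltW (Zpart_gt0 _ _ _)) //.
by rewrite ler_nat; exact: card_orbit_tuples_le.
Qed.

Lemma sum_cyc_len_eq_geometric a A C n : (0 < n)%N ->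
  (forall m, (card_SAP adj o m)%:R <= C * A ^+ m) ->
  \sum_(p | cyc_len_eq n p) weight a p <= C * swap_gain a * (A / beta a) ^+ n * Zpart adj U a.
Proof.
move=> n_gt0 growth; set b := swap_gain a; set S := \sum_(p | _) _; set Z := Zpart adj U a.
have b_gt0 : 0 < b := swap_gain_gt0 a.
have Z_ge0 : 0 <= Z := ltW (Zpart_gt0 adj U a).
have S_ge0 : 0 <= S by apply: sumr_ge0 => p _; exact: expR_ge0.
have b_pow_le : b ^+ n.-1 <= (1 + expR (- (2 * a))) ^+ n./2.
  by rewrite -swap_gain_sqr -exprM ler_weXn2l ?swap_gain_ge1 //; lia. (* n - 1 <= 2 (n / 2) *)
rewrite -(ler_pM2l (exprn_gt0 n.-1 b_gt0)).
apply: le_trans (ler_wpM2r S_ge0 b_pow_le) _.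
apply: le_trans (sum_cyc_len_eq_le a n_gt0) _.
have -> : b ^+ n.-1 * (C * b * (A / beta a) ^+ n * Z) = C * A ^+ n * (expR (- a * n%:R) * Z).
  have -> : expR (- a * n%:R) = (expR a ^+ n)^-1 by rewrite mulrC expRM_natl expRN exprVn.
  rewrite /beta -/b expr_div_n exprMn.
  have -> : b ^+ n = b * b ^+ n.-1 by rewrite -exprS prednK.
  by field; rewrite ?expf_neq0 ?gt_eqF ?expR_gt0.
by rewrite ler_wpM2r ?mulr_ge0 ?expR_ge0.
Qed.

Lemma prob_cyc_gt_le a A C l :
  (forall m, (card_SAP adj o m)%:R <= C * A ^+ m) -> 0 <= C -> 0 <= A / beta a < 1 ->
  prob_cyc_gt adj a z l <= C * swap_gain a / (1 - A / beta a) * (A / beta a) ^+ l.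
Proof.
move=> growth C_ge0 r_01; set r := A / beta a.
have Z_gt0 := Zpart_gt0 adj U a.
rewrite /prob_cyc_gt ler_pdivrMr //.
have cyc_len_lt p : (cyc_len p z < #|{: U}|.+1)%N.
  by rewrite /cyc_len; case: ifP => // _; rewrite ltnS max_card.
rewrite (partition_big (fun p => inord (cyc_len p z) : 'I_#|{: U}|.+1)
                       (fun j => (l < j)%N)) => [|p /andP [_]]; last by rewrite inordK.
apply: (@le_trans _ _ (\sum_(j < #|{: U}|.+1 | (l < j)%N)
                          (C * swap_gain a * r ^+ j * Zpart adj U a))).
  apply: ler_sum => j l_j; rewrite (eq_bigl (cyc_len_eq j)) => [|p].
    by apply: sum_cyc_len_eq_geometric => //; lia.
  rewrite /= -val_eqE /= inordK //.
  by case: (cyc_len p z =P j) => [->|]; rewrite ?l_j ?andbT ?andbF.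
rewrite -big_distrl -big_distrr /= ler_wpM2r ?(ltW Z_gt0) //.
rewrite -[leRHS]mulrA ler_wpM2l ?mulr_ge0 ?(ltW (swap_gain_gt0 a)) // mulrC.
exact: sum_geometric_tail_le.
Qed.

End CycleThroughOrigin.

Lemma limn_sup_lt_near (R : realType) (u : R^nat) (A : R) :
  bounded_fun u -> limn_sup u < A -> \forall n \near \oo, u n < A.
Proof.
move=> u_bd; rewrite limn_supE // => sups_lt.
have u_ub := bounded_fun_has_ubound u_bd.
have sups_near := cvgr_lt _ (cvg_sups_inf u_ub (bounded_fun_has_lbound u_bd)) _ sups_lt.
near=> n; apply: le_lt_trans (_ : u n <= sups u n) _; last by near: n; apply: sups_near.
by rewrite /sups /=; apply: ub_le_sup; [exact: has_ubound_sdrop | exists n => /=].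
Unshelve. all: end_near.
Qed.

Lemma geometric_bound_of_limn_sup (R : realType) (c : nat -> nat) (D : nat) (A : R) :
  (0 < D)%N -> (forall n, (c n <= D ^ n)%N) -> 0 < A ->
  limn_sup (fun n => (c n)%:R `^ n%:R^-1) < A ->
  exists2 C, 0 < C & forall n, (c n)%:R <= C * A ^+ n.
Proof.
move=> D_gt0 cD A_gt0; set u := fun n => _ => u_lt.
have u_ge0 n : 0 <= u n by exact: powR_ge0.
have u_pow n : (0 < n)%N -> u n ^+ n = (c n)%:R.
  move=> n_gt0; rewrite /u -powR_mulrn ?powR_ge0 // -powRrM mulVf ?powRr1 //.
  by rewrite pnatr_eq0 -lt0n.
have u_le n : u n <= D%:R.
  case: n => [|n]; first by rewrite /u invr0 powRr0 ler1n.
  by rewrite -(ler_pXn2r (n := n.+1)) ?nnegrE ?u_pow // -natrX ler_nat.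
have u_bd : bounded_fun u.
  exists D%:R; split=> [|M DM n _]; first exact: num_real.
  by rewrite /= ger0_norm //; apply: le_trans (u_le n) (ltW DM).
have [N _ u_lt_A] := limn_sup_lt_near u_bd u_lt.
have head_ge0 : 0 <= \sum_(i < N.+1) (c i)%:R / A ^+ i.
  by apply: sumr_ge0 => i _; rewrite divr_ge0 // exprn_ge0 // ltW.
exists (1 + \sum_(i < N.+1) (c i)%:R / A ^+ i) => [|n]; first by rewrite ltr_pwDl.
have [n_le|n_gt] := ltnP n N.+1.
  rewrite -ler_pdivrMr ?exprn_gt0 // (bigD1 (Ordinal n_le)) //= addrCA lerDl.
  by rewrite addr_ge0 // sumr_ge0 // => i _; rewrite divr_ge0 // exprn_ge0 // ltW.
have n_gt0 : (0 < n)%N by case: n n_gt.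
rewrite -u_pow //; apply: (@le_trans _ _ (A ^+ n)).
  by rewrite ler_pXn2r ?nnegrE ?(ltW A_gt0) //; apply/ltW/u_lt_A/ltnW.
by rewrite ler_peMl ?exprn_ge0 ?(ltW A_gt0) // lerDl.
Qed.

Lemma cvgy_div_id (R : realType) (f : R -> R) (K : R) :
  (\forall x \near +oo, `|f x - x| <= K) -> (f x / x : R) @[x --> +oo] --> (1 : R).
Proof.
move=> near_id; apply/cvgrPdist_le => e e_gt0; near=> x.
have x_gt0 : 0 < x by near: x; apply: nbhs_pinfty_gt; rewrite num_real.
have -> : 1 - f x / x = (x - f x) / x by field; rewrite gt_eqF.
rewrite normrM normfV (gtr0_norm x_gt0) distrC ler_pdivrMr //.
apply: (@le_trans _ _ K); first by near: x.
rewrite -ler_pdivrMl //; near: x; apply: nbhs_pinfty_ge; rewrite num_real.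
Unshelve. all: end_near.
Qed.

Lemma limf_esup_lty (R : realType) (f : R -> R) (K : R) :
  (\forall x \near +oo, f x <= K) -> (limf_esup (fun x => (f x)%:E) +oo%R < +oo)%E.
Proof.
move=> near_K; rewrite limf_esupE; apply: (@le_lt_trans _ _ K%:E); last exact: ltry.
apply: ereal_inf_le; exists (ereal_sup [set (f x)%:E | x in [set x | f x <= K]]).
  by exists [set x | f x <= K].
by apply: ub_ereal_sup => _ [x fxK <-]; rewrite lee_fin.
Qed.

Section DecayRates.
Variables (R : realType) (c : nat -> nat) (m : R).
Hypothesis m_ge0 : 0 <= m.
Hypothesis growth : forall A, m < A -> exists2 C, 0 < C & forall n, (c n)%:R <= C * A ^+ n.
Implicit Types a A : R.

Definition growth_const A := xget 0 [set C | 0 < C /\ forall n, (c n)%:R <= C * A ^+ n].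

Lemma growth_constP A : m < A ->
  0 < growth_const A /\ forall n, (c n)%:R <= growth_const A * A ^+ n.
Proof.
move=> /growth [C C_gt0 cC].
by have : [set C | 0 < C /\ forall n, (c n)%:R <= C * A ^+ n] (growth_const A)
  by apply: xgetPex; exists C.
Qed.

(* Any base strictly between m and beta a works; this one is m + 1 once beta a > m + 2,
   which keeps decay_const bounded. *)
Definition decay_base a := Num.min (m + 1) ((m + beta a) / 2).
Definition decay_ratio a := decay_base a / beta a.
Definition decay_rate a := - ln (decay_ratio a).
Definition decay_const a := growth_const (decay_base a) * swap_gain a / (1 - decay_ratio a).

Lemma decay_base_bounds a : m < beta a -> m < decay_base a < beta a.
Proof.
move=> m_beta; rewrite lt_min gt_min.
by apply/andP; split; [apply/andP; split | apply/orP; right]; lra.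
Qed.

Lemma decay_ratio_bounds a : m < beta a -> 0 < decay_ratio a < 1.
Proof.
case/decay_base_bounds/andP => m_base base_beta.
apply/andP; split; first by rewrite divr_gt0 ?beta_gt0 // (le_lt_trans m_ge0 m_base).
by rewrite ltr_pdivrMr ?beta_gt0 // mul1r.
Qed.

Lemma decay_rate_gt0 a : m < beta a -> 0 < decay_rate a.
Proof. by move=> /decay_ratio_bounds r01; rewrite oppr_gt0 ln_lt0. Qed.

Lemma decay_const_gt0 a : m < beta a -> 0 < decay_const a.
Proof.
move=> m_beta; have /andP [_ r_lt1] := decay_ratio_bounds m_beta.
have /andP [m_base _] := decay_base_bounds m_beta.
have [C_gt0 _] := growth_constP m_base.
by rewrite divr_gt0 ?mulr_gt0 ?swap_gain_gt0 ?subr_gt0.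
Qed.

Lemma expR_decay_rate a l : m < beta a -> expR (- (decay_rate a * l%:R)) = decay_ratio a ^+ l.
Proof.
move=> /decay_ratio_bounds /andP [r_gt0 _].
by rewrite mulNr opprK mulrC expRM_natl lnK ?posrE.
Qed.

Lemma beta_gt_large a : ln (m + 2) < a -> m + 2 < beta a.
Proof.
move=> large; apply: lt_le_trans (expR_le_beta a).
by rewrite -[ltLHS]lnK ?ltr_expR ?posrE // ltr_wpDl.
Qed.

Lemma decay_base_large a : m + 2 < beta a -> decay_base a = m + 1.
Proof. by move=> beta_big; apply/min_idPl; lra. Qed.

Lemma decay_rate_near :
  \forall a \near +oo, `|decay_rate a - a| <= `|ln (m + 1)| + 1.
Proof.
near=> a.
have a_gt0 : 0 < a by near: a; apply: nbhs_pinfty_gt; rewrite num_real.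
have beta_big : m + 2 < beta a.
  by apply: beta_gt_large; near: a; apply: nbhs_pinfty_gt; rewrite num_real.
have -> : decay_rate a - a = ln (swap_gain a) - ln (m + 1).
  rewrite /decay_rate /decay_ratio decay_base_large //.
  rewrite lnM ?posrE ?invr_gt0 ?beta_gt0 ?ltr_wpDl //.
  rewrite lnV ?posrE ?beta_gt0 // lnM ?posrE ?expR_gt0 ?swap_gain_gt0 // expRK; ring.
have ln_gain_ge0 : 0 <= ln (swap_gain a) := ln_ge0 (swap_gain_ge1 a).
have ln_gain_le1 : ln (swap_gain a) <= 1.
  rewrite -[leRHS](expRK 1) ler_ln ?posrE ?swap_gain_gt0 ?expR_gt0 //.
  by apply: le_trans (swap_gain_le2 (ltW a_gt0)) _; have := expR_ge1Dx (1 : R); lra.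
by apply: le_trans (ler_normB _ _) _; rewrite ger0_norm //; lra.
Unshelve. all: end_near.
Qed.

Lemma decay_const_near :
  \forall a \near +oo, decay_const a <= growth_const (m + 1) * 2 * (m + 2).
Proof.
near=> a.
have a_gt0 : 0 < a by near: a; apply: nbhs_pinfty_gt; rewrite num_real.
have beta_big : m + 2 < beta a.
  by apply: beta_gt_large; near: a; apply: nbhs_pinfty_gt; rewrite num_real.
have beta_gt0 := beta_gt0 a.
have [C_gt0 _] := growth_constP (ltr_pwDr ltr01 (lexx m)).
rewrite /decay_const /decay_ratio decay_base_large // -!mulrA ler_wpM2l ?(ltW C_gt0) //.
have r_lt1 : (m + 1) / beta a < 1 by rewrite ltr_pdivrMr // mul1r; lra.
apply: ler_pM.
- exact: ltW (swap_gain_gt0 a).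
- by rewrite invr_ge0 subr_ge0 ltW.
- exact/swap_gain_le2/ltW.
rewrite -div1r ler_pdivrMr ?subr_gt0 //.
have : (m + 1) * ((m + 2) / beta a) <= (m + 1) * 1.
  by rewrite ler_wpM2l ?addr_ge0 // ler_pdivrMr ?mul1r // ltW.
have -> : (m + 2) * (1 - (m + 1) / beta a) = m + 2 - (m + 1) * ((m + 2) / beta a).
  by field; rewrite gt_eqF.
lra.
Unshelve. all: end_near.
Qed.

End DecayRates.

Theorem theorem2p1 (R : realType) (V : choiceType) (adj : rel V) (o : V)
  (Hsimple : simple_graph adj) (Hinf : infinite_graph V)
  (Hbdd : bounded_degree adj) (Htrans : vertex_transitive adj)
  (alpha0 : R)
  (Halpha0 : alpha0 + 2^-1 * ln (1 + expR (- (2 * alpha0))) = ln (mu_G R adj o)) :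
  exists C0 c0 : R -> R,
    (forall alpha : R, alpha0 < alpha ->
       0 < C0 alpha /\ 0 < c0 alpha /\
       forall (U : {fset V}) (z : U) (l : nat),
         prob_cyc_gt adj alpha z l <= C0 alpha * expR (- (c0 alpha * l%:R)))
    /\ ((c0 x / x : R) @[x --> +oo] --> (1 : R))
    /\ (limf_esup (fun alpha => (C0 alpha)%:E) +oo%R < +oo)%E.
Proof.
have adj_sym : forall x y, adj x y = adj y x by case: Hsimple.
have [D /choice [nbrs nbrsP]] := Hbdd.
have size_nbrs x : (size (nbrs x) <= D.+1)%N by apply: leqW; case: (nbrsP x).
have nbrs_adj x y : adj x y -> y \in nbrs x by case: (nbrsP x) => _; apply.
have SAP_fin := SAP_finite o nbrs_adj.
pose m := Num.max (mu_G R adj o) 0. (* spares proving mu_G >= 0 *)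
have m_ge0 : 0 <= m by rewrite le_max lexx orbT.
have growth A : m < A -> exists2 C, 0 < C & forall n, (card_SAP adj o n)%:R <= C * A ^+ n.
  move=> m_lt; apply: (@geometric_bound_of_limn_sup _ _ D.+1) => //.
  - exact: card_SAP_le size_nbrs nbrs_adj _.
  - exact: le_lt_trans m_ge0 m_lt.
  - by apply: le_lt_trans m_lt; rewrite le_max lexx.
have m_lt_beta a : alpha0 < a -> m < beta a.
  by move=> a0_a; rewrite gt_max beta_gt0 andbT; apply: lt_beta a0_a; rewrite ln_beta.
exists (decay_const (card_SAP adj o) m), (decay_rate m); split; [|split].
- move=> a /m_lt_beta m_beta; split; first exact: decay_const_gt0.
  split=> [|U z l]; first exact: decay_rate_gt0.
  have [phi [/bij_inj phi_inj [phi_adj phi_z]]] := Htrans (val z) o.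
  have /andP [m_base _] := decay_base_bounds m_beta.
  have [C_gt0 growth_C] := growth_constP growth m_base.
  have /andP [r_gt0 r_lt1] := decay_ratio_bounds m_ge0 m_beta.
  rewrite expR_decay_rate //.
  by apply: (prob_cyc_gt_le adj_sym SAP_fin phi_inj phi_adj phi_z) => //; rewrite ?ltW ?r_lt1.
- exact: cvgy_div_id (decay_rate_near m_ge0).
- exact: limf_esup_lty (decay_const_near m_ge0 growth).
Qed.
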